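(* Let $G_m$ be a parametric regulatory network and $T\subseteq\Delta(G_m)$ a set of transitions. Then $p^\#(T)=p(T)$, i.e. the set of parametrisations $\{P\mid L\le P\le U\}$ with $(L,U)=p^\#(T)$ is exactly $p(T)$.
   Context: An influence graph is $G=(V,I)$ with $V=\{1,\dots,n\}$, $I\subseteq V\times V$; the regulators of $v$ are $n^-(v)=\{u\mid(u,v)\in I\}$. A vector $m\in\mathbb N^n$ gives maximal values, $D_v=\{0,\dots,m_v\}$, and $G_m=(G,m)$ is a PRN. Regulator states of $v$: $\Omega_v=\prod_{u\in n^-(v)}D_u$. Parameters: $\Omega=\bigcup_v\{v\}\times\Omega_v$. Parametrisations: vectors $P\in\mathbb P(G_m)=\prod_{\langle v,\omega\rangle\in\Omega}D_v$ with coordinates $P_{v,\omega}$, ordered componentwise; $\bot$ is the zero vector and $\top_{v,\omega}=m_v$. A pair $(L,U)$ denotes $\{P\mid L\le P\le U\}$ (empty if $L\not\le U$). States $S(G_m)=\prod_vD_v$; $\omega_v(x)$ is the projection of state $x$ onto the regulators of $v$. Transitions $\Delta(G_m)$: $x\xrightarrow{v,+}y$ where $y$ equals $x$ except $y_v=x_v+1\le m_v$, and $x\xrightarrow{v,-}y$ where $y_v=x_v-1\ge0$. $\mathcal P_{x\xrightarrow{v,+}y}=\{P\mid P_{v,\omega_v(x)}\ge x_v+1\}$, $\mathcal P_{x\xrightarrow{v,-}y}=\{P\mid P_{v,\omega_v(x)}\le x_v-1\}$; $p(\emptyset)=\mathbb P(G_m)$, $p(T)=\bigcap_{t\in T}\mathcal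 P_t$. Narrowing: $\nabla_{x\xrightarrow{v,+}y}(L,U)=(\max(L,\bot[(v,\omega_v(x))\leftarrow x_v+1]),U)$ and $\nabla_{x\xrightarrow{v,-}y}(L,U)=(L,\min(U,\top[(v,\omega_v(x))\leftarrow x_v-1]))$ (componentwise max/min; $Q[(v,\omega)\leftarrow k]$ replaces that coordinate by $k$). The abstraction is $p^\#(\emptyset)=(\bot,\top)$ and $p^\#(T\cup\{t\})=\nabla_t(p^\#(T))$. *)

From mathcomp Require Import all_boot.
Set Implicit Arguments. Unset Strict Implicit. Unset Printing Implicit Defensive.

(* Vertices are 'I_n; the influence graph is I : {set 'I_n * 'I_n};
   maximal values are m : 'I_n -> nat (D_v = {0..m v}). *)

Definition state (n : nat) := {ffun 'I_n -> nat}.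

Definition valid_state n (m : 'I_n -> nat) (x : state n) : Prop :=
  forall v, x v <= m v.

(* Regulator states of v are encoded as functions on 'I_n that are 0 outside
   the regulators n^-(v) = [set u | (u,v) \in I] and bounded by m on them. *)
Definition is_regstate n (I : {set 'I_n * 'I_n}) (m : 'I_n -> nat)
  (v : 'I_n) (w : state n) : Prop :=
  forall u, if (u, v) \in I then w u <= m u else w u == 0.

Definition omega n (I : {set 'I_n * 'I_n}) (v : 'I_n) (x : state n) : state n :=
  [ffun u => if (u, v) \in I then x u else 0].

(* Parametrisation vectors, indexed by parameters <v,omega>; only the
   coordinates at genuine parameters (is_regstate) matter. *)
Definition pvec (n : nat) := 'I_n -> state n -> nat.

Definition is_param n (I : {set 'I_n * 'I_n}) (m : 'I_n -> nat) (P : pvec n) : Prop :=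
  forall v w, is_regstate I m v w -> P v w <= m v.

Definition ple n (I : {set 'I_n * 'I_n}) (m : 'I_n -> nat) (P Q : pvec n) : Prop :=
  forall v w, is_regstate I m v w -> P v w <= Q v w.

Definition pbot n : pvec n := fun _ _ => 0.
Definition ptop n (m : 'I_n -> nat) : pvec n := fun v _ => m v.

Definition pupd n (Q : pvec n) (v : 'I_n) (w : state n) (k : nat) : pvec n :=
  fun v' w' => if (v' == v) && (w' == w) then k else Q v' w'.

Definition pmax n (P Q : pvec n) : pvec n := fun v w => maxn (P v w) (Q v w).
Definition pmin n (P Q : pvec n) : pvec n := fun v w => minn (P v w) (Q v w).

Definition in_interval n (I : {set 'I_n * 'I_n}) (m : 'I_n -> nat) (LU : pvec n * pvec n) (P : pvec n)
  : Prop :=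
  is_param I m P /\ ple I m LU.1 P /\ ple I m P LU.2.

(* A transition x --v,s--> y is encoded as (x, v, s) with s = true for '+'
   and s = false for '-'; y is determined by x, v, s. *)
Definition transition (n : nat) := (state n * 'I_n * bool)%type.

Definition valid_transition n (m : 'I_n -> nat) (t : transition n) : Prop :=
  let: (x, v, s) := t in
  valid_state m x /\ (if s then x v + 1 <= m v else 1 <= x v).

Definition target n (t : transition n) : state n :=
  let: (x, v, s) := t in
  [ffun u => if u == v then (if s then x v + 1 else x v - 1) else x u].

Definition sat_trans n (I : {set 'I_n * 'I_n}) (t : transition n) (P : pvec n) : Prop :=
  let: (x, v, s) := t in
  if s then x v + 1 <= P v (omega I v x) else P v (omega I v x) <= x v - 1.

Definition in_p n (I : {set 'I_n * 'I_n}) (m : 'I_n -> nat) (T : seq (transition n)) (P : pvec n)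
  : Prop :=
  is_param I m P /\ forall t, t \in T -> sat_trans I t P.

Definition narrow n (I : {set 'I_n * 'I_n}) (m : 'I_n -> nat) (t : transition n)
  (LU : pvec n * pvec n) : pvec n * pvec n :=
  let: (x, v, s) := t in
  if s then (pmax LU.1 (pupd (@pbot n) v (omega I v x) (x v + 1)), LU.2)
  else (LU.1, pmin LU.2 (pupd (ptop m) v (omega I v x) (x v - 1))).

Fixpoint psharp n (I : {set 'I_n * 'I_n}) (m : 'I_n -> nat) (T : seq (transition n))
  : pvec n * pvec n :=
  match T with
  | [::] => (@pbot n, ptop m)
  | t :: T' => narrow I m t (psharp I m T')
  end.

From mathcomp Require Import all_boot.
Set Implicit Arguments.
Unset Strict Implicit.
Unset Printing Implicit Defensive.

(** Each narrowing step imposes exactly one coordinate bound, on the parameter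
    [(v, omega_v(x))] of the transition, and that bound is precisely the
    constraint [P_t]; so by induction on [T] the interval [p#(T)] is cut out
    by the same constraints as [p(T)].  Of the validity of a transition only
    [x] being a state matters: it makes [(v, omega_v(x))] a genuine parameter. *)

Section Narrowing.

Variables (n : nat) (I : {set 'I_n * 'I_n}) (m : 'I_n -> nat).

Lemma omega_regstate v (x : state n) :
  valid_state m x -> is_regstate I m v (omega I v x).
Proof. by move=> x_valid u; rewrite ffunE; case: ((u, v) \in I). Qed.

Lemma ple_pmaxl (L Q P : pvec n) :
  ple I m (pmax L Q) P <-> ple I m L P /\ ple I m Q P.
Proof.
split=> [le_LQ_P | [le_LP le_QP] v w w_reg].
  by split=> v w w_reg; have := le_LQ_P v w w_reg; rewrite geq_max => /andP[].
by rewrite geq_max le_LP // le_QP.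
Qed.

Lemma ple_pminr (P U Q : pvec n) :
  ple I m P (pmin U Q) <-> ple I m P U /\ ple I m P Q.
Proof.
split=> [le_P_UQ | [le_PU le_PQ] v w w_reg].
  by split=> v w w_reg; have := le_P_UQ v w w_reg; rewrite leq_min => /andP[].
by rewrite leq_min le_PU // le_PQ.
Qed.

Lemma ple_pupd_bot (P : pvec n) v w k :
  is_regstate I m v w -> ple I m (pupd (@pbot n) v w k) P <-> k <= P v w.
Proof.
move=> w_reg; split=> [le_kP | le_k v' w' _].
  by have := le_kP v w w_reg; rewrite /pupd !eqxx.
by rewrite /pupd; case: andP => // -[/eqP -> /eqP ->].
Qed.

Lemma ple_pupd_top (P : pvec n) v w k :
  is_param I m P -> is_regstate I m v w ->
  ple I m P (pupd (ptop m) v w k) <-> P v w <= k.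
Proof.
move=> P_param w_reg; split=> [le_Pk | le_k v' w' w'_reg].
  by have := le_Pk v w w_reg; rewrite /pupd !eqxx.
by rewrite /pupd; case: andP => [[/eqP -> /eqP ->] | _] //; apply: P_param.
Qed.

Lemma in_interval_bot_top (P : pvec n) :
  in_interval I m (@pbot n, ptop m) P <-> is_param I m P.
Proof.
split=> [[] // | P_param].
by split=> //; split=> v w w_reg //; apply: P_param.
Qed.

Lemma in_interval_narrow (x : state n) v s (LU : pvec n * pvec n) (P : pvec n) :
  valid_state m x ->
  in_interval I m (narrow I m (x, v, s) LU) P <->
  in_interval I m LU P /\ sat_trans I (x, v, s) P.
Proof.
case: s => /= x_valid; have w_reg := omega_regstate v x_valid.
- split=> [[P_param [/ple_pmaxl[le_LP /(ple_pupd_bot _ _ w_reg) le_kP] le_PU]]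
          | [[P_param [le_LP le_PU]] le_kP]]; first by [].
  by do 2!split=> //; apply/ple_pmaxl; split=> //; apply/(ple_pupd_bot _ _ w_reg).
- split=> [[P_param [le_LP /ple_pminr[le_PU /(ple_pupd_top _ P_param w_reg) le_Pk]]]
          | [[P_param [le_LP le_PU]] le_Pk]]; first by [].
  by do 2!split=> //; apply/ple_pminr; split=> //; apply/(ple_pupd_top _ P_param w_reg).
Qed.

Lemma in_p_cons (t : transition n) T (P : pvec n) :
  in_p I m (t :: T) P <-> in_p I m T P /\ sat_trans I t P.
Proof.
split=> [[P_param sat_tT] | [[P_param sat_T] sat_t]].
  by split; [split=> // t' t'_in |]; apply: sat_tT; rewrite in_cons ?eqxx ?t'_in ?orbT.
by split=> // t'; rewrite in_cons => /orP[/eqP -> | /sat_T].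
Qed.

End Narrowing.

Theorem theorem1 (n : nat) (I : {set 'I_n * 'I_n}) (m : 'I_n -> nat)
  (T : seq (transition n)) :
  (forall t, t \in T -> valid_transition m t) ->
  forall P : pvec n, in_interval I m (psharp I m T) P <-> in_p I m T P.
Proof.
move=> T_valid P; elim: T T_valid => [_ | [[x v] s] T IH T_valid].
  by apply: iff_trans (in_interval_bot_top I m P) _; split=> [|[]].
have [[x_valid _] T'_valid] :
    valid_transition m (x, v, s) /\ {in T, forall t, valid_transition m t}.
  by split=> [|t t_in]; apply: T_valid; rewrite in_cons ?eqxx ?t_in ?orbT.
apply: iff_trans (in_interval_narrow I v s _ P x_valid) _.
apply: iff_trans (iff_sym (in_p_cons I m _ _ P)).
by split=> -[/(IH T'_valid) in_T sat_t]; split=> //; apply/(IH T'_valid).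
Qed.
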